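(* Let $\mathcal X$ be a separable Hilbert space, $a:\mathcal X\times\mathcal X\to\mathbb R$ a bounded bilinear form with $\inf_{x\neq0}a(x,x)/\|x\|_{\mathcal X}^2=c_0>0$, $f\in\mathcal X^*$, and let $u\in\mathcal X$ solve $a(u,v)=f(v)$ for all $v\in\mathcal X$. Let $(w_n)_{n\in\mathbb N}$ be a Riesz basis of $\mathcal X$ with a constant $C>0$ such that every $x=\sum_n\lambda_nw_n\in\mathcal X$ satisfies $C^{-1}\|x\|_{\mathcal X}^2\le\sum_n\lambda_n^2\le C\|x\|_{\mathcal X}^2$, and let $\mathcal X_\ell={\rm span}\{w_1,\dots,w_{N_\ell}\}$ for integers $N_\ell<N_{\ell+1}$; let $u_\ell\in\mathcal X_\ell$ solve $a(u_\ell,v)=f(v)$ for all $v\in\mathcal X_\ell$. If the matrix $M_{ij}:=a(w_j,w_i)$ belongs to the Jaffard class $\mathcal J$, then there exists $C_{\rm qo}>0$ with \[ C_{\rm qo}^{-1}\|u-u_\ell\|_{\mathcal X}^2\le\sum_{k=\ell}^\infty\|u_{k+1}-u_k\|_{\mathcal X}^2\le C_{\rm qo}\|u-u_\ell\|_{\mathcal X}^2\quad\text{for all }\ell\in\mathbb N. \] The constant $C_{\rm qo}$ depends only on $(w_n)$, $a$, $C$, $c_0$, the Jaffard class and $\mathcal X$.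
   Context: $M\in\mathcal J$ means there exist a metric $d$ on $\mathbb N$ with $\sup_i\sum_j\exp(-\varepsilon d(i,j))<\infty$ for all $\varepsilon>0$, and $\gamma>0$, such that for every $0<\gamma'<\gamma$ there is $C(\gamma')$ with $|M_{ij}|\le C(\gamma')\exp(-\gamma'd(i,j))$ for all $i,j$. *)

From HB Require Import structures.
From mathcomp Require Import all_boot all_order all_algebra.
From mathcomp Require Import all_classical all_reals all_analysis.
Set Implicit Arguments. Unset Strict Implicit. Unset Printing Implicit Defensive.
Import Order.TTheory GRing.Theory Num.Theory.
Import numFieldNormedType.Exports.
Local Open Scope classical_set_scope.
Local Open Scope ring_scope.

(* [ip] is an inner product on V inducing the norm of V (so V, being complete,
   is a real Hilbert space). *)
Definition hilbert_inner (R : realType) (V : normedModType R) (ip : V -> V -> R) :=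
  [/\ forall r x y z, ip (r *: x + y) z = r * ip x z + ip y z,
      forall x y, ip x y = ip y x,
      forall x, 0 <= ip x x &
      forall x, `|x| ^+ 2 = ip x x].

Definition separable_space (R : realType) (V : normedModType R) :=
  exists D : set V, countable D /\ dense D.

Definition bounded_bilinear (R : realType) (V : normedModType R) (a : V -> V -> R) :=
  [/\ forall r x y z, a (r *: x + y) z = r * a x z + a y z,
      forall r x y z, a z (r *: x + y) = r * a z x + a z y &
      exists K : R, forall x y, `|a x y| <= K * `|x| * `|y| ].

Definition coercivity_constant (R : realType) (V : normedModType R)
    (a : V -> V -> R) (c0 : R) :=
  (forall x : V, x != 0 -> c0 <= a x x / `|x| ^+ 2) /\
  (forall c : R, (forall x : V, x != 0 -> c <= a x x / `|x| ^+ 2) -> c <= c0).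

Definition dual_elt (R : realType) (V : normedModType R) (f : V -> R) :=
  (forall r x y, f (r *: x + y) = r * f x + f y) /\
  exists K : R, forall x, `|f x| <= K * `|x|.

Definition series_to (R : realType) (V : normedModType R)
    (w : nat -> V) (lam : nat -> R) (x : V) :=
  (fun n => \sum_(i < n) lam i *: w i) @ \oo --> x.

(* Riesz basis with constant C (indexed from 0) *)
Definition riesz_basis (R : realType) (V : normedModType R) (w : nat -> V) (C : R) :=
  (forall x : V, exists lam : nat -> R, series_to w lam x) /\
  (forall (x : V) (lam : nat -> R), series_to w lam x ->
     ((C^-1 * `|x| ^+ 2)%:E <= \sum_(0 <= n <oo) ((lam n) ^+ 2)%:E)%E /\
     (\sum_(0 <= n <oo) ((lam n) ^+ 2)%:E <= (C * `|x| ^+ 2)%:E)%E).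

Definition span_first (R : realType) (V : normedModType R) (w : nat -> V) (N : nat) : set V :=
  [set x | exists c : nat -> R, x = \sum_(i < N) c i *: w i].

Definition nat_metric (R : realType) (d : nat -> nat -> R) :=
  [/\ forall i j, 0 <= d i j,
      forall i j, d i j = 0 <-> i = j,
      forall i j, d i j = d j i &
      forall i j k, d i k <= d i j + d j k].

Definition jaffard (R : realType) (M : nat -> nat -> R) :=
  exists d : nat -> nat -> R,
    nat_metric d /\
    (forall eps : R, 0 < eps -> exists B : R, forall i : nat,
        (\sum_(0 <= j <oo) (expR (- (eps * d i j)))%:E <= B%:E)%E) /\
    exists gamma : R, 0 < gamma /\
      forall gamma' : R, 0 < gamma' -> gamma' < gamma ->
        exists Cg : R, forall i j, `|M i j| <= Cg * expR (- (gamma' * d i j)).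

(* Run the Gram-Schmidt process with respect to the non-symmetric form a on the
   Riesz basis (w_n): phi_n is w_n plus a combination of w_0, ..., w_(n-1) such that
   a(phi_n, v) = 0 on span{w_k : k < n}, and psi_n is built the same way for the
   adjoint form, so that a(phi_m, psi_n) = 0 for m <> n.  The Galerkin solution on
   span{w_k : k < N} is then the partial sum of sum_m y_m phi_m with
   y_m = a(u, psi_m) / a(phi_m, psi_m), and u_(l+1) - u_l is the block of this series
   between N_l and N_(l+1).
   The Jaffard decay of the stiffness matrix is inherited by the coefficients of phi_n
   and psi_n in the basis w: conjugating the stiffness matrix by the weights
   exp(e d(k, n)) changes it by a small perturbation when e is small.  A Schur test
   then shows that (phi_n) is a Riesz sequence, so both the sum of the squared
   increments from l on and |u_L - u_l|^2 are comparable to sum_(N_l <= m < N_L) y_m^2;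
   letting L go to infinity gives the claim. *)

From HB Require Import structures.
From mathcomp Require Import all_boot all_order all_algebra.
From mathcomp Require Import all_classical all_reals all_analysis.
From mathcomp Require Import ring lra.
Set Implicit Arguments. Unset Strict Implicit. Unset Printing Implicit Defensive.
Import Order.TTheory GRing.Theory Num.Theory.
Import numFieldNormedType.Exports.
Local Open Scope classical_set_scope.
Local Open Scope ring_scope.

Definition bilinear_form (R : pzRingType) (V : lmodType R) (b : V -> V -> R) :=
  (forall r x y z, b (r *: x + y) z = r * b x z + b y z) /\
  (forall r x y z, b z (r *: x + y) = r * b z x + b z y).

Definition adjoint_form (R : pzRingType) (V : lmodType R) (b : V -> V -> R) :=
  fun x y => b y x.

Lemma bilinear_adjoint (R : pzRingType) (V : lmodType R) (b : V -> V -> R) :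
  bilinear_form b -> bilinear_form (adjoint_form b).
Proof. by case=> bl br; split=> r x y z; rewrite /adjoint_form ?bl ?br. Qed.

Section BilinearFormLeft.
Variables (R : pzRingType) (V : lmodType R) (b : V -> V -> R).
Hypothesis b_bil : bilinear_form b.

Lemma bilin0l z : b 0 z = 0.
Proof.
have h := b_bil.1 1 0 0 z; rewrite scaler0 addr0 mul1r in h.
by apply: (addrI (b 0 z)); rewrite addr0 -h.
Qed.

Lemma bilinDl x y z : b (x + y) z = b x z + b y z.
Proof. by have := b_bil.1 1 x y z; rewrite scale1r mul1r. Qed.

Lemma bilinZl r x z : b (r *: x) z = r * b x z.
Proof. by have := b_bil.1 r x 0 z; rewrite !addr0 bilin0l addr0. Qed.

Lemma bilinBl x y z : b (x - y) z = b x z - b y z.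
Proof. by have := b_bil.1 (-1) y x z; rewrite scaleN1r mulN1r addrC [RHS]addrC. Qed.

Lemma bilin_sumZl (I : Type) (r : seq I) (P : pred I) (c : I -> R) (F : I -> V) z :
  b (\sum_(i <- r | P i) c i *: F i) z = \sum_(i <- r | P i) c i * b (F i) z.
Proof.
rewrite (big_morph (b^~ z) (fun x y => bilinDl x y z) (bilin0l z)).
by apply: eq_bigr => i _; rewrite bilinZl.
Qed.

End BilinearFormLeft.

Section BilinearFormRight.
Variables (R : pzRingType) (V : lmodType R) (b : V -> V -> R).
Hypothesis b_bil : bilinear_form b.

Lemma bilinBr x y z : b z (x - y) = b z x - b z y.
Proof. exact: (bilinBl (bilinear_adjoint b_bil)). Qed.

Lemma bilin_sumZr (I : Type) (r : seq I) (P : pred I) (c : I -> R) (F : I -> V) z :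
  b z (\sum_(i <- r | P i) c i *: F i) = \sum_(i <- r | P i) c i * b z (F i).
Proof. exact: (bilin_sumZl (bilinear_adjoint b_bil)). Qed.

End BilinearFormRight.

Record bounded_coercive (R : realType) (V : normedModType R) (b : V -> V -> R)
    (c0 K : R) : Prop := BoundedCoercive {
  form_bilinear : bilinear_form b;
  form_bounded : forall x y, `|b x y| <= K * `|x| * `|y|;
  form_coercive : forall x, c0 * `|x| ^+ 2 <= b x x }.

Lemma bounded_coercive_adjoint (R : realType) (V : normedModType R) (b : V -> V -> R)
    (c0 K : R) :
  bounded_coercive b c0 K -> bounded_coercive (adjoint_form b) c0 K.
Proof.
case=> bil bnd coer; split => //; first exact: bilinear_adjoint.
by move=> x y; rewrite /adjoint_form mulrAC bnd.
Qed.

Definition galerkin_solution (R : realType) (V : normedModType R) (b : V -> V -> R)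
    (S : set V) (u g : V) :=
  S g /\ forall v, S v -> b g v = b u v.

Section Galerkin.
Variables (R : realType) (V : normedModType R) (b : V -> V -> R) (c0 K : R).
Hypotheses (bK : bounded_coercive b c0 K) (c0_gt0 : 0 < c0) (K_ge0 : 0 <= K).
Let b_bil := form_bilinear bK.

Lemma coercive_norm_le (x r : V) : b x x <= K * `|x| * `|r| -> c0 * `|x| <= K * `|r|.
Proof.
move=> le_bxx; have coer := form_coercive bK x.
have [x0 | x_gt0] := eqVneq `|x| 0; first by rewrite x0 mulr0 mulr_ge0.
have {}x_gt0 : 0 < `|x| by rewrite lt_def x_gt0 normr_ge0.
rewrite -(ler_pM2r x_gt0); nra.
Qed.

Variable S : set V.
Hypothesis S_sub : forall x y, S x -> S y -> S (x - y).

Lemma galerkin_unique u g1 g2 :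
  galerkin_solution b S u g1 -> galerkin_solution b S u g2 -> g1 = g2.
Proof.
move=> [Sg1 gal1] [Sg2 gal2]; have Se := S_sub Sg1 Sg2.
have : c0 * `|g1 - g2| <= K * `|0 : V|.
  by apply: coercive_norm_le; rewrite bilinBl // gal1 // gal2 // subrr normr0 !mulr0.
by rewrite normr0 mulr0 pmulr_rle0 // normr_le0 subr_eq0 => /eqP.
Qed.

Lemma galerkin_cea u g v :
  galerkin_solution b S u g -> S v -> c0 * `|u - g| <= K * `|u - v|.
Proof.
move=> [Sg gal] Sv; apply: coercive_norm_le.
have orth : b (u - g) (v - g) = 0 by rewrite bilinBl // gal ?subrr //; exact: S_sub.
have -> : b (u - g) (u - g) = b (u - g) (u - v).
  have -> : u - v = (u - g) - (v - g) by rewrite opprB addrA subrK.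
  by rewrite [RHS]bilinBr // orth subr0.
exact: le_trans (ler_norm _) (form_bounded bK _ _).
Qed.

End Galerkin.

Lemma sumr_ord_widen (V : nmodType) n m (F : nat -> V) :
  (n <= m)%N -> (forall k, (n <= k)%N -> F k = 0) ->
  \sum_(i < m) F i = \sum_(i < n) F i.
Proof.
move=> le_nm F0; rewrite (big_ord_widen m F le_nm) [RHS]big_mkcond /=.
by apply: eq_bigr => i _; case: ltnP => // /F0.
Qed.

Section SpanFirst.
Variables (R : realType) (V : normedModType R) (w : nat -> V).

Lemma span_first0 n : span_first w n 0.
Proof. by exists (fun=> 0); rewrite big1 // => i _; rewrite scale0r. Qed.

Lemma span_firstZD n r x y :
  span_first w n x -> span_first w n y -> span_first w n (r *: x + y).
Proof.
move=> [c ->] [c' ->]; exists (fun i => r * c i + c' i).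
by rewrite scaler_sumr -big_split; apply: eq_bigr => i _; rewrite scalerDl scalerA.
Qed.

Lemma span_firstZ n r x : span_first w n x -> span_first w n (r *: x).
Proof. by move=> nx; rewrite -[_ *: _]addr0; apply: span_firstZD => //; apply: span_first0. Qed.

Lemma span_firstD n x y : span_first w n x -> span_first w n y -> span_first w n (x + y).
Proof. by rewrite -[x in x + _]scale1r; apply: span_firstZD. Qed.

Lemma span_firstB n x y : span_first w n x -> span_first w n y -> span_first w n (x - y).
Proof. by move=> nx ny; rewrite addrC -scaleN1r; apply: span_firstZD. Qed.

Lemma span_firstS m n : (m <= n)%N -> span_first w m `<=` span_first w n.
Proof.
move=> le_mn _ [c ->]; exists (fun i => if (i < m)%N then c i else 0).
rewrite (big_ord_widen n (fun i => c i *: w i) le_mn) big_mkcond /=.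
by apply: eq_bigr => i _; case: ifP; rewrite ?scale0r.
Qed.

Lemma span_first_basis n k : (k < n)%N -> span_first w n (w k).
Proof.
move=> lt_kn; apply: (span_firstS lt_kn); exists (fun i => (i == k)%:R).
rewrite big_ord_recr /= eqxx scale1r big1 ?add0r // => i _.
by rewrite (ltn_eqF (ltn_ord i)) scale0r.
Qed.

Lemma span_first_sum n (I : Type) (r : seq I) (P : pred I) (F : I -> V) :
  (forall i, P i -> span_first w n (F i)) -> span_first w n (\sum_(i <- r | P i) F i).
Proof. by move=> nF; apply: big_ind => //; [apply: span_first0 | apply: span_firstD]. Qed.

End SpanFirst.

Lemma galerkin_cvg (R : realType) (V : normedModType R) (w : nat -> V)
    (b : V -> V -> R) (c0 K : R) (lam : nat -> R) (u : V) (N : nat -> nat) (x : nat -> V) :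
  bounded_coercive b c0 K -> 0 < c0 -> 0 <= K -> series_to w lam u ->
  (forall l, (l <= N l)%N) ->
  (forall l, galerkin_solution b (span_first w (N l)) u (x l)) ->
  x @ \oo --> u.
Proof.
move=> bK c0_gt0 K_ge0 lam_u N_ge x_gal; apply/cvgrPdist_le => eps eps_gt0.
have delta_gt0 : 0 < eps * c0 / (K + 1) by rewrite !divr_gt0 ?mulr_gt0 ?ltr_wpDl.
move/cvgrPdist_le: lam_u => /(_ _ delta_gt0) [M0 _ near_u].
exists M0 => // l /= le_M0l.
have cea := galerkin_cea bK K_ge0 (@span_firstB _ _ w _) (x_gal l)
  (ex_intro _ lam erefl : span_first w (N l) (\sum_(i < N l) lam i *: w i)).
rewrite -(ler_pM2l c0_gt0); apply: le_trans cea _.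
apply: le_trans (ler_wpM2l K_ge0 (near_u _ (leq_trans le_M0l (N_ge l)))) _.
by rewrite mulrA ler_pdivrMr ?ltr_wpDl //; nra.
Qed.

Section RieszBasis.
Variables (R : realType) (V : normedModType R) (w : nat -> V) (C : R).
Hypothesis w_riesz : riesz_basis w C.

Lemma riesz_basis_sum n (c : nat -> R) :
  C^-1 * `|\sum_(i < n) c i *: w i| ^+ 2 <= \sum_(i < n) c i ^+ 2 /\
  \sum_(i < n) c i ^+ 2 <= C * `|\sum_(i < n) c i *: w i| ^+ 2.
Proof.
pose c' i := if (i < n)%N then c i else 0.
have c'E (T : nmodType) (F : nat -> R -> T) m : (n <= m)%N -> (forall i, F i 0 = 0) ->
    \sum_(i < m) F i (c' i) = \sum_(i < n) F i (c i).
  move=> le_nm F0; rewrite (sumr_ord_widen (F := fun i => F i (c' i)) le_nm) => [|k].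
    by apply: eq_bigr => i _; rewrite /c' ltn_ord.
  by rewrite /c' ltnNge => ->.
have c'_series : series_to w c' (\sum_(i < n) c i *: w i).
  apply: cvg_near_cst; exists n => // m /= le_nm.
  exact: (c'E _ (fun i r => r *: w i) _ le_nm (fun i => scale0r _)).
have c'_sqr : (\sum_(0 <= k <oo) ((c' k) ^+ 2)%:E)%E = (\sum_(i < n) c i ^+ 2)%:E.
  apply: lim_near_cst => //; exists n => // m /= le_nm.
  rewrite sumEFin big_mkord; congr EFin.
  exact: (c'E _ (fun _ r => r ^+ 2) _ le_nm (fun _ => expr0n _ _)).
have [] := w_riesz.2 _ _ c'_series.
by rewrite c'_sqr !lee_fin.
Qed.

Lemma riesz_basis_norm n : 0 < C -> `|w n| ^+ 2 <= C.
Proof.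
move=> C_gt0; have [+ _] := riesz_basis_sum n.+1 (fun i => (i == n)%:R).
rewrite big_ord_recr /= eqxx scale1r big1 ?add0r => [|i _]; last first.
  by rewrite (ltn_eqF (ltn_ord i)) scale0r.
rewrite big_ord_recr /= eqxx expr1n big1 ?add0r => [|i _]; last first.
  by rewrite (ltn_eqF (ltn_ord i)) expr0n.
by rewrite ler_pdivrMl // mulr1.
Qed.

End RieszBasis.

Section SchurTest.
Variable R : realFieldType.

Lemma schur_test n (x : nat -> R) (E : nat -> nat -> R) S :
  (forall j k, 0 <= E j k) ->
  (forall j, \sum_(k < n) E j k <= S) -> (forall k, \sum_(j < n) E j k <= S) ->
  \sum_(j < n) \sum_(k < n) `|x j| * `|x k| * E j k <= S * \sum_(j < n) x j ^+ 2.
Proof.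
move=> E_ge0 rowE colE.
have rows (F : nat -> nat -> R) T : (forall j, \sum_(k < n) F j k <= T) ->
    \sum_(j < n) \sum_(k < n) x j ^+ 2 * F j k <= T * \sum_(j < n) x j ^+ 2.
  move=> rowF; rewrite mulr_sumr; apply: ler_sum => j _.
  by rewrite -mulr_sumr mulrC ler_wpM2r ?sqr_ge0.
apply: (@le_trans _ _ (\sum_(j < n) \sum_(k < n)
    (x j ^+ 2 * (E j k / 2) + x k ^+ 2 * (E j k / 2)))).
  apply: ler_sum => j _; apply: ler_sum => k _.
  rewrite -(real_normK (num_real (x j))) -(real_normK (num_real (x k))).
  have := mulr_ge0 (sqr_ge0 (`|x j| - `|x k|)) (E_ge0 j k); nra.
under eq_bigr do rewrite big_split /=.
rewrite big_split /= [X in _ + X]exchange_big /=.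
have half (F : nat -> nat -> R) j : \sum_(k < n) F j k <= S ->
    \sum_(k < n) F j k / 2 <= S / 2.
  by rewrite -mulr_suml; lra.
have := rows (fun j k => E j k / 2) _ (half _ ^~ (rowE _)).
have := rows (fun k j => E j k / 2) _ (half (fun k j => E j k) ^~ (colE _)).
lra.
Qed.

Lemma schur_test_sqr n (P p : nat -> nat -> R) (y : nat -> R) S : 0 <= S ->
  (forall m k, `|P m k| <= p m k) ->
  (forall m, \sum_(k < n) p m k <= S) -> (forall k, \sum_(m < n) p m k <= S) ->
  \sum_(m < n) (\sum_(k < n) P m k * y k) ^+ 2 <= S ^+ 2 * \sum_(k < n) y k ^+ 2.
Proof.
move=> S_ge0 Pp rowp colp.
have p_ge0 m k : 0 <= p m k := le_trans (normr_ge0 _) (Pp m k).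
pose E k l := \sum_(m < n) p m k * p m l.
have rowE k : \sum_(l < n) E k l <= S ^+ 2.
  rewrite exchange_big /= (eq_bigr (fun m : 'I_n => p m k * \sum_(l < n) p m l)).
    apply: (@le_trans _ _ (\sum_(m < n) p m k * S)).
      by apply: ler_sum => m _; rewrite ler_wpM2l.
    by rewrite -mulr_suml expr2 ler_wpM2r.
  by move=> m _; rewrite mulr_sumr.
have colE l : \sum_(k < n) E k l <= S ^+ 2.
  by rewrite (eq_bigr (fun k : 'I_n => E l k)) // => k _; apply: eq_bigr => m _; rewrite mulrC.
apply: (@le_trans _ _ (\sum_(m < n) (\sum_(k < n) p m k * `|y k|) ^+ 2)).
  apply: ler_sum => m _; rewrite -(real_normK (num_real (\sum_(k < n) _))).
  rewrite ler_sqr ?nnegrE ?sumr_ge0 // => [|k _]; last by rewrite mulr_ge0.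
  apply: le_trans (ler_norm_sum _ _ _) _; apply: ler_sum => k _.
  by rewrite normrM ler_wpM2r.
have -> : \sum_(m < n) (\sum_(k < n) p m k * `|y k|) ^+ 2 =
    \sum_(k < n) \sum_(l < n) `|y k| * `|y l| * E k l.
  under eq_bigr do rewrite expr2 big_distrlr /=.
  rewrite exchange_big; apply: eq_bigr => k _; rewrite /= exchange_big.
  by apply: eq_bigr => l _; rewrite /E mulr_sumr; apply: eq_bigr => m _; ring.
by apply: schur_test => // k l; apply: sumr_ge0 => m _; rewrite mulr_ge0.
Qed.

End SchurTest.

Section ExpEstimates.
Variable R : realType.

Lemma norm_expR_sub1 (x : R) : `|expR x - 1| <= expR `|x| - 1.
Proof.
have [x_ge0 | x_lt0] := lerP 0 x.
  by rewrite (ger0_norm x_ge0) ger0_norm // subr_ge0 -expR0 ler_expR.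
rewrite (ltr0_norm x_lt0) ler0_norm; last by rewrite subr_le0 expR_le1 ltW.
rewrite expRN; have ex_gt0 := expR_gt0 x; set y := expR x in ex_gt0 *.
have : 0 <= (y - 1) ^+ 2 / y by rewrite divr_ge0 ?sqr_ge0 ?ltW.
have -> : (y - 1) ^+ 2 / y = y - 2 + y^-1 by field; rewrite gt_eqF.
lra.
Qed.

Lemma expR_weight_defect (g e t : R) : 0 < g -> 0 < e -> e <= g / 4 -> 0 <= t ->
  expR (- (g * t)) * (expR (e * t) - 1) <= e * (2 / g) * expR (- (g / 4 * t)).
Proof.
move=> g_gt0 e_gt0 le_eg t_ge0.
have sub1_le : expR (e * t) - 1 <= e * t * expR (e * t).
  have := expR_ge1Dx (- (e * t)); rewrite expRN => h.
  have := ler_wpM2r (ltW (expR_gt0 (e * t))) h.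
  by rewrite mulVf ?gt_eqF ?expR_gt0 //; lra.
have t_le : t <= 2 / g * expR (g / 2 * t).
  have := expR_ge1Dx (g / 2 * t) => h.
  rewrite {1}(_ : t = 2 / g * (g / 2 * t)); last by field; rewrite gt_eqF.
  by rewrite ler_wpM2l ?divr_ge0 ?ltW //; lra.
have key : e * t * expR (e * t) <= e * (2 / g * expR (g / 2 * t)) * expR (g / 4 * t).
  apply: ler_pM; first by rewrite mulr_ge0 // ltW.
  - exact: ltW (expR_gt0 _).
  - by rewrite ler_wpM2l // ltW.
  - by rewrite ler_expR ler_wpM2r.
have eexp : expR (- (g * t)) * expR (g / 2 * t) * expR (g / 4 * t) = expR (- (g / 4 * t)).
  by rewrite -!expRD; congr expR; field.
have := ler_wpM2l (ltW (expR_gt0 (- (g * t)))) (le_trans sub1_le key).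
rewrite -eexp; nra.
Qed.

End ExpEstimates.

Definition gram_schmidt (R : realType) (V : normedModType R) (w : nat -> V)
    (b : V -> V -> R) n (phi : V) :=
  span_first w n (phi - w n) /\ forall v, span_first w n v -> b phi v = 0.

Definition gram_schmidt_pair (R : realType) (V : normedModType R) (w : nat -> V)
    (b : V -> V -> R) (phi psi : nat -> V) :=
  forall m, gram_schmidt w b m (phi m) /\ gram_schmidt w (adjoint_form b) m (psi m).

Definition gram_schmidt_upto (R : realType) (V : normedModType R) (w : nat -> V)
    (b : V -> V -> R) N (phi psi : nat -> V) :=
  forall m, (m < N)%N ->
    gram_schmidt w b m (phi m) /\ gram_schmidt w (adjoint_form b) m (psi m).

Lemma gram_schmidt_span (R : realType) (V : normedModType R) (w : nat -> V)
    (b : V -> V -> R) n N phi : (n < N)%N -> gram_schmidt w b n phi -> span_first w N phi.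
Proof.
move=> lt_nN [nphi _]; rewrite -(subrK (w n) phi).
by apply: span_firstD; [exact: span_firstS (ltnW lt_nN) _ nphi | exact: span_first_basis].
Qed.

Lemma unitriangular_span (R : realType) (V : normedModType R) (w psi : nat -> V) N :
  (forall m, (m < N)%N -> span_first w m (psi m - w m)) ->
  forall v, span_first w N v -> exists beta : nat -> R, v = \sum_(m < N) beta m *: psi m.
Proof.
elim: N => [|N IH] npsi v [c ->]; first by exists (fun=> 0); rewrite !big_ord0.
have : span_first w N (\sum_(k < N) c k *: w k - c N *: (psi N - w N)).
  by apply: span_firstB; [exists c | apply/span_firstZ/npsi].
case/IH => [m lt_mN|beta betaE]; first by apply: npsi; rewrite ltnW.
exists (fun m => if m == N then c N else beta m).
rewrite [RHS]big_ord_recr /= eqxx.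
rewrite (eq_bigr (fun i : 'I_N => beta i *: psi i)) => [|i _]; last by rewrite ltn_eqF.
by rewrite -betaE big_ord_recr /= scalerBr opprB addrA subrK.
Qed.

Section GramSchmidt.
Variables (R : realType) (V : normedModType R) (w : nat -> V) (b : V -> V -> R).
Variables (C c0 K : R).
Hypotheses (bK : bounded_coercive b c0 K) (w_riesz : riesz_basis w C).
Hypotheses (C_gt0 : 0 < C) (c0_gt0 : 0 < c0) (K_ge0 : 0 <= K).
Let b_bil := form_bilinear bK.

Lemma gram_schmidt_coef n phi : gram_schmidt w b n phi ->
  exists c : nat -> R,
    [/\ phi = \sum_(k < n.+1) c k *: w k, c n = 1 & forall k, (n < k)%N -> c k = 0].
Proof.
case=> [[c phiE] _]; exists (fun k => if (k < n)%N then c k else (k == n)%:R); split.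
- rewrite big_ord_recr /= ltnn eqxx scale1r -[LHS](subrK (w n)) phiE.
  by congr (_ + _); apply: eq_bigr => i _; rewrite ltn_ord.
- by rewrite ltnn eqxx.
- by move=> k lt_nk; rewrite ltnNge (ltnW lt_nk) gtn_eqF.
Qed.

Lemma gram_schmidt_diag n phi : gram_schmidt w b n phi -> b phi phi = b phi (w n).
Proof. by case=> nphi orth; apply/eqP; rewrite -subr_eq0 -bilinBr // orth. Qed.

Lemma gram_schmidt_biorth m j phi psi :
  gram_schmidt w b m phi -> gram_schmidt w (adjoint_form b) j psi -> m != j ->
  b phi psi = 0.
Proof.
move=> gphi gpsi; case: (ltngtP m j) => // [lt_mj | lt_jm] _.
  exact: gpsi.2 _ (gram_schmidt_span lt_mj gphi).
exact: gphi.2 _ (gram_schmidt_span lt_jm gpsi).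
Qed.

Lemma gram_schmidt_pair_diag m phi psi :
  gram_schmidt w b m phi -> gram_schmidt w (adjoint_form b) m psi ->
  b phi psi = b phi phi.
Proof.
move=> [nphi orth] [npsi _]; apply/eqP; rewrite -subr_eq0 -bilinBr // orth //.
have -> : psi - phi = (psi - w m) - (phi - w m) by rewrite opprB addrA subrK.
exact: span_firstB.
Qed.

Lemma gram_schmidt_ge n phi : gram_schmidt w b n phi -> c0 / C <= b phi phi.
Proof.
move=> gphi; have [c [phiE cn _]] := gram_schmidt_coef gphi.
have [_] := riesz_basis_sum w_riesz n.+1 c; rewrite -phiE => le_cphi.
have le1 : 1 <= C * `|phi| ^+ 2.
  apply: le_trans le_cphi.
  by rewrite big_ord_recr /= cn expr1n lerDr sumr_ge0 // => k _; rewrite sqr_ge0.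
rewrite ler_pdivrMr //; apply: le_trans (ler_wpM2r (ltW C_gt0) (form_coercive bK phi)).
by rewrite -mulrA [_ * C]mulrC ler_peMr ?(ltW c0_gt0).
Qed.

Lemma gram_schmidt_le n phi : gram_schmidt w b n phi -> b phi phi <= K ^+ 2 * C / c0.
Proof.
move=> gphi.
have bnd : b phi phi <= K * `|phi| * `|w n|.
  by rewrite (gram_schmidt_diag gphi); exact: le_trans (ler_norm _) (form_bounded bK _ _).
have nphi := coercive_norm_le bK K_ge0 bnd.
have wn := riesz_basis_norm w_riesz n C_gt0.
rewrite ler_pdivlMr //; apply: le_trans (ler_wpM2r (ltW c0_gt0) bnd) _.
rewrite (_ : _ * c0 = K * `|w n| * (c0 * `|phi|)); last by ring.
apply: le_trans (ler_wpM2l (mulr_ge0 K_ge0 (normr_ge0 _)) nphi) _.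
rewrite (_ : K * `|w n| * (K * `|w n|) = K ^+ 2 * `|w n| ^+ 2); last by ring.
by rewrite ler_wpM2l ?sqr_ge0.
Qed.

Lemma gram_schmidt_pair_bounds m phi psi :
  gram_schmidt w b m phi -> gram_schmidt w (adjoint_form b) m psi ->
  c0 / C <= b phi psi <= K ^+ 2 * C / c0.
Proof.
move=> gphi gpsi; rewrite (gram_schmidt_pair_diag gphi gpsi).
by rewrite (gram_schmidt_ge gphi) (gram_schmidt_le gphi).
Qed.

Lemma gram_schmidt_pair_neq0 m phi psi :
  gram_schmidt w b m phi -> gram_schmidt w (adjoint_form b) m psi -> b phi psi != 0.
Proof.
move=> gphi gpsi; rewrite (gram_schmidt_pair_diag gphi gpsi).
by apply: contraTneq (gram_schmidt_ge gphi) => ->; rewrite -ltNge divr_gt0.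
Qed.

Lemma gram_schmidt_next N phi psi : gram_schmidt_upto w b N phi psi ->
  gram_schmidt w b N (w N - \sum_(m < N) (b (w N) (psi m) / b (phi m) (psi m)) *: phi m).
Proof.
move=> gs; split.
  rewrite addrAC subrr add0r -scaleN1r; apply: span_firstZ; apply: span_first_sum => m _.
  exact/span_firstZ/(gram_schmidt_span (ltn_ord m) (gs m (ltn_ord m)).1).
move=> v /(unitriangular_span (fun m lt_mN => (gs m lt_mN).2.1)) [beta ->].
rewrite bilin_sumZr // big1 // => j _; have [gphi gpsi] := gs j (ltn_ord j).
rewrite bilinBl // bilin_sumZl // (bigD1 j) //= big1 => [|i neq_ij]; last first.
  by rewrite (gram_schmidt_biorth (gs i (ltn_ord i)).1 gpsi) ?mulr0.
by rewrite addr0 divfK ?subrr ?mulr0 // (gram_schmidt_pair_neq0 gphi gpsi).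
Qed.

Lemma gram_schmidt_sum_pair phi psi M (y : nat -> R) j :
  gram_schmidt_pair w b phi psi -> (j < M)%N ->
  b (\sum_(m < M) y m *: phi m) (psi j) = y j * b (phi j) (psi j).
Proof.
move=> gs lt_jM; rewrite bilin_sumZl // (bigD1 (Ordinal lt_jM)) //= big1 ?addr0 // => i neq_ij.
by rewrite (gram_schmidt_biorth (gs i).1 (gs j).2) ?mulr0.
Qed.

End GramSchmidt.

Lemma gram_schmidt_pair_exists (R : realType) (V : normedModType R) (w : nat -> V)
    (b : V -> V -> R) (C c0 K : R) :
  bounded_coercive b c0 K -> riesz_basis w C -> 0 < C -> 0 < c0 ->
  exists phi psi, gram_schmidt_pair w b phi psi.
Proof.
move=> bK w_riesz C_gt0 c0_gt0.
have upto N : exists phi psi, gram_schmidt_upto w b N phi psi.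
  elim: N => [|N [phi [psi gs]]]; first by exists (fun=> 0), (fun=> 0).
  have gs' : gram_schmidt_upto w (adjoint_form b) N psi phi.
    by move=> m /gs [].
  have gphiN := gram_schmidt_next bK w_riesz C_gt0 c0_gt0 gs.
  have gpsiN := gram_schmidt_next (bounded_coercive_adjoint bK) w_riesz C_gt0 c0_gt0 gs'.
  exists (fun m => if m == N then
           w N - \sum_(m < N) (b (w N) (psi m) / b (phi m) (psi m)) *: phi m else phi m).
  exists (fun m => if m == N then
           w N - \sum_(m < N) (b (phi m) (w N) / b (phi m) (psi m)) *: psi m else psi m).
  move=> m; rewrite ltnS leq_eqVlt => /predU1P [-> | lt_mN]; first by rewrite eqxx.
  by rewrite ltn_eqF //; apply: gs.
have /choice [pp ppE] : forall m, exists pp : V * V,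
    gram_schmidt w b m pp.1 /\ gram_schmidt w (adjoint_form b) m pp.2.
  by move=> m; have [phi [psi gs]] := upto m.+1; exists (phi m, psi m); apply: gs.
by exists (fun m => (pp m).1), (fun m => (pp m).2).
Qed.

Definition exp_localized (R : realType) (V : normedModType R) (w : nat -> V)
    (b : V -> V -> R) (d : nat -> nat -> R) (Cg g : R) :=
  forall i j, `|b (w j) (w i)| <= Cg * expR (- (g * d i j)).

Definition exp_summable (R : realType) (d : nat -> nat -> R) :=
  forall eps, 0 < eps ->
    exists2 B : R, 0 < B & forall i n, \sum_(j < n) expR (- (eps * d i j)) <= B.

Section Decay.
Variables (R : realType) (V : normedModType R) (w : nat -> V) (b : V -> V -> R).
Variables (C c0 K : R) (d : nat -> nat -> R) (Cg g e B : R).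
Hypotheses (bK : bounded_coercive b c0 K) (w_riesz : riesz_basis w C).
Hypotheses (C_gt0 : 0 < C) (c0_gt0 : 0 < c0) (K_ge0 : 0 <= K).
Hypotheses (d_metric : nat_metric d) (b_loc : exp_localized w b d Cg g).
Hypotheses (g_gt0 : 0 < g) (Cg_ge0 : 0 <= Cg) (e_gt0 : 0 < e) (le_e_g : e <= g / 4).
Hypothesis B_sum : forall i n, \sum_(j < n) expR (- (g / 4 * d i j)) <= B.
Hypothesis e_small : e * Cg * (2 / g) * B <= c0 / C / 2.
Let b_bil := form_bilinear bK.

Lemma weight_defect_le n j k :
  `|b (w k) (w j)| * `|expR (e * d j n) / expR (e * d k n) - 1|
    <= e * Cg * (2 / g) * expR (- (g / 4 * d j k)).
Proof.
have [d_ge0 _ d_sym d_tri] := d_metric.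
have le_djk : `|e * d j n - e * d k n| <= e * d j k.
  rewrite -mulrBr normrM gtr0_norm // ler_pM2l // ler_norml.
  by have := d_tri j k n; have := d_tri k j n; rewrite (d_sym k j); lra.
have le_weight : `|expR (e * d j n) / expR (e * d k n) - 1| <= expR (e * d j k) - 1.
  by rewrite -expRB (le_trans (norm_expR_sub1 _)) // lerD2r ler_expR.
apply: le_trans (ler_pM (normr_ge0 _) (normr_ge0 _) (b_loc j k) le_weight) _.
have -> : e * Cg * (2 / g) * expR (- (g / 4 * d j k)) =
    Cg * (e * (2 / g) * expR (- (g / 4 * d j k))) by ring.
rewrite -[X in X <= _]mulrA; apply: ler_wpM2l => //; exact: expR_weight_defect.
Qed.

Lemma weighted_form_defect n N (x : nat -> R) :
  `|\sum_(j < N) \sum_(k < N)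
      x j * x k * b (w k) (w j) * (expR (e * d j n) / expR (e * d k n) - 1)|
    <= c0 / C / 2 * \sum_(j < N) x j ^+ 2.
Proof.
have [_ _ d_sym _] := d_metric.
have coef_ge0 : 0 <= e * Cg * (2 / g).
  by rewrite mulr_ge0 ?divr_ge0 ?(ltW g_gt0) // mulr_ge0 // ltW.
pose E j k := e * Cg * (2 / g) * expR (- (g / 4 * d j k)).
have E_ge0 j k : 0 <= E j k by rewrite mulr_ge0 // expR_ge0.
have E_row j : \sum_(k < N) E j k <= e * Cg * (2 / g) * B.
  by rewrite -mulr_sumr; apply: ler_wpM2l.
have E_col k : \sum_(j < N) E j k <= e * Cg * (2 / g) * B.
  by rewrite -mulr_sumr; apply: ler_wpM2l => //; under eq_bigr do rewrite d_sym.
apply: le_trans (ler_norm_sum _ _ _) _.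
apply: (@le_trans _ _ (\sum_(j < N) \sum_(k < N) `|x j| * `|x k| * E j k)).
  apply: ler_sum => j _; apply: le_trans (ler_norm_sum _ _ _) _; apply: ler_sum => k _.
  rewrite !normrM -!mulrA; do 2 apply: ler_wpM2l => //; exact: weight_defect_le.
apply: le_trans (schur_test x E_ge0 E_row E_col) _.
by apply: ler_wpM2r => //; rewrite sumr_ge0 // => j _; rewrite sqr_ge0.
Qed.

Lemma gram_schmidt_decay_at n phi : gram_schmidt w b n phi ->
  exists c : nat -> R, [/\ phi = \sum_(k < n.+1) c k *: w k,
    forall k, (n < k)%N -> c k = 0 &
    forall k, `|c k| <= (1 + 2 * (K * C / c0) ^+ 2) * expR (- (e * d k n))].
Proof.
move=> gphi; have [c [phiE cn c_eq0]] := gram_schmidt_coef gphi.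
exists c; split => // k; have [lt_nk | le_kn] := ltnP n k.
  rewrite c_eq0 // normr0; apply: mulr_ge0 (expR_ge0 _).
  by rewrite addr_ge0 // mulr_ge0 // sqr_ge0.
have [_ d_eq0 _ _] := d_metric.
pose om j := expR (e * d j n).
pose ct j := om j * c j.
pose Q := \sum_(j < n.+1) ct j ^+ 2.
suff Q_le : Q <= 2 * (K * C / c0) ^+ 2.
  have ctk_le : ct k ^+ 2 <= Q.
    rewrite /Q (bigD1 (Ordinal (le_kn : (k < n.+1)%N))) //= lerDl.
    by rewrite sumr_ge0 // => j _; rewrite sqr_ge0.
  have -> : c k = ct k * expR (- (e * d k n)).
    by rewrite /ct /om expRN mulrAC mulfV ?mul1r ?gt_eqF ?expR_gt0.
  rewrite normrM (gtr0_norm (expR_gt0 _)) ler_wpM2r ?expR_ge0 //.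
  rewrite -(real_normK (num_real (ct k))) in ctk_le; have := normr_ge0 (ct k); nra.
have om_n : om n = 1 by rewrite /om (d_eq0 n n).2 // mulr0 expR0.
pose phit := \sum_(j < n.+1) ct j *: w j.
pose v := \sum_(j < n.+1) (om j * ct j) *: w j.
have bv : b phi v = b phi phi.
  rewrite (gram_schmidt_diag bK gphi) /v bilin_sumZr // big_ord_recr /= big1 ?add0r => [|j _].
    by rewrite /ct om_n cn !mul1r.
  by rewrite gphi.2 ?mulr0 //; apply: span_first_basis.
have bphit : c0 / C * Q <= b phit phit.
  have [_ le_Q] := riesz_basis_sum w_riesz n.+1 ct.
  apply: le_trans (form_coercive bK phit).
  apply: le_trans (ler_wpM2l _ le_Q) _; first by rewrite divr_ge0 // ltW.
  by rewrite mulrA divfK ?gt_eqF.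
have defect : b phit phit - b phi v <= c0 / C / 2 * Q.
  apply: le_trans (ler_norm _) _; rewrite distrC.
  have -> : b phi v - b phit phit = \sum_(j < n.+1) \sum_(l < n.+1)
      ct j * ct l * b (w l) (w j) * (om j / om l - 1).
    rewrite /v /phit !bilin_sumZr // -sumrB; apply: eq_bigr => j _.
    rewrite phiE !bilin_sumZl // !mulr_sumr -sumrB; apply: eq_bigr => l _.
    by rewrite /ct; field; rewrite gt_eqF ?expR_gt0.
  exact: weighted_form_defect.
have := gram_schmidt_le bK w_riesz C_gt0 c0_gt0 K_ge0 gphi; rewrite -bv => le_T.
have : c0 / C / 2 * Q <= K ^+ 2 * C / c0 by lra.
rewrite (_ : 2 * (K * C / c0) ^+ 2 = K ^+ 2 * C / c0 / (c0 / C / 2)); last first.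
  by field; rewrite !gt_eqF.
by move=> le_aQ; rewrite ler_pdivlMr ?divr_gt0 // mulrC.
Qed.

End Decay.

Lemma gram_schmidt_decay (R : realType) (V : normedModType R) (w : nat -> V)
    (b : V -> V -> R) (C c0 K : R) (d : nat -> nat -> R) (Cg g : R) :
  bounded_coercive b c0 K -> riesz_basis w C -> 0 < C -> 0 < c0 -> 0 <= K ->
  nat_metric d -> exp_summable d -> exp_localized w b d Cg g -> 0 < g ->
  exists e, 0 < e /\ forall n phi, gram_schmidt w b n phi ->
    exists c : nat -> R, [/\ phi = \sum_(k < n.+1) c k *: w k,
      forall k, (n < k)%N -> c k = 0 &
      forall k, `|c k| <= (1 + 2 * (K * C / c0) ^+ 2) * expR (- (e * d k n))].
Proof.
move=> bK w_riesz C_gt0 c0_gt0 K_ge0 d_metric d_sum b_loc g_gt0.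
have g4_gt0 : 0 < g / 4 by rewrite divr_gt0.
have [B /ltW B_ge0 B_sum] := d_sum _ g4_gt0.
have Cg_ge0 : 0 <= Cg.
  by have := le_trans (normr_ge0 _) (b_loc 0%N 0%N); rewrite pmulr_lge0 ?expR_gt0.
pose X := Cg * (2 / g) * B.
have X_ge0 : 0 <= X.
  by rewrite /X mulr_ge0 // mulr_ge0 // divr_ge0 // ltW.
pose Z := c0 / C / 2.
have Z_gt0 : 0 < Z by rewrite !divr_gt0.
pose e := Num.min (g / 4) (Z / (X + 1)).
have e_gt0 : 0 < e by rewrite lt_min g4_gt0 divr_gt0 // ltr_wpDl.
exists e; split => // n phi; apply: gram_schmidt_decay_at => //.
- by rewrite ge_min lexx.
- have -> : e * Cg * (2 / g) * B = e * X by rewrite /X; ring.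
  apply: (@le_trans _ _ (Z / (X + 1) * X)); first by rewrite ler_wpM2r // ge_min lexx orbT.
  by rewrite mulrAC ler_pdivrMr ?ltr_wpDl // -/Z ler_pM2l // lerDl.
Qed.

Lemma exp_localized_adjoint (R : realType) (V : normedModType R) (w : nat -> V)
    (b : V -> V -> R) (d : nat -> nat -> R) (Cg g : R) :
  nat_metric d -> exp_localized w b d Cg g -> exp_localized w (adjoint_form b) d Cg g.
Proof. by case=> _ _ d_sym _ b_loc i j; rewrite d_sym; apply: b_loc. Qed.

Lemma mul_le_amgm (R : realFieldType) (a y t T u : R) : 0 < u -> 0 <= t <= T ->
  a * y * t <= T * ((u * a ^+ 2 + y ^+ 2 / u) / 2).
Proof.
move=> u_gt0 /andP[t_ge0 le_tT].
have amgm : a * y <= (u * a ^+ 2 + y ^+ 2 / u) / 2.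
  have : 0 <= (u * a - y) ^+ 2 / u by rewrite divr_ge0 ?sqr_ge0 ?ltW.
  have -> : (u * a - y) ^+ 2 / u = u * a ^+ 2 - 2 * (a * y) + y ^+ 2 / u.
    by field; rewrite gt_eqF.
  lra.
have : 0 <= y ^+ 2 / u by rewrite divr_ge0 ?sqr_ge0 ?ltW.
have := mulr_ge0 (ltW u_gt0) (sqr_ge0 a).
nra.
Qed.

Section FormFrame.
Variables (R : realType) (V : normedModType R) (w : nat -> V) (b : V -> V -> R).
Variables (C c0 K : R).
Hypotheses (bK : bounded_coercive b c0 K) (w_riesz : riesz_basis w C).
Hypotheses (C_gt0 : 0 < C) (K_ge0 : 0 <= K).

Lemma sum_sqr_form_basis_le x M : \sum_(k < M) b x (w k) ^+ 2 <= K ^+ 2 * C * `|x| ^+ 2.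
Proof.
set G := \sum_(k < M) _; set z := \sum_(k < M) b x (w k) *: w k.
have G_ge0 : 0 <= G by rewrite sumr_ge0 // => k _; rewrite sqr_ge0.
have Gz : G = b x z.
  by rewrite /G (bilin_sumZr (form_bilinear bK)); apply: eq_bigr => k _; rewrite expr2.
have le_z : `|z| ^+ 2 <= C * G.
  have [+ _] := riesz_basis_sum w_riesz M (fun k => b x (w k)).
  by rewrite -/z ler_pdivrMl.
have le_G : G <= K * `|x| * `|z|.
  by rewrite Gz; exact: le_trans (ler_norm _) (form_bounded bK _ _).
have [-> | G_neq0] := eqVneq G 0; first by rewrite !mulr_ge0 ?sqr_ge0 // ltW.
have G_gt0 : 0 < G by rewrite lt_def G_neq0.
rewrite -(ler_pM2r G_gt0) -expr2.
apply: (@le_trans _ _ ((K * `|x| * `|z|) ^+ 2)).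
  by rewrite ler_sqr ?nnegrE // !mulr_ge0.
rewrite !exprMn (_ : _ * G = K ^+ 2 * `|x| ^+ 2 * (C * G)); last by ring.
by apply: ler_wpM2l le_z; rewrite mulr_ge0 ?sqr_ge0.
Qed.

End FormFrame.

Section RieszLower.
Variables (R : realType) (V : normedModType R) (w : nat -> V) (b : V -> V -> R).
Variables (C c0 K : R) (d : nat -> nat -> R) (Cg g : R) (phi psi : nat -> V).
Hypotheses (bK : bounded_coercive b c0 K) (w_riesz : riesz_basis w C).
Hypotheses (C_gt0 : 0 < C) (c0_gt0 : 0 < c0) (K_gt0 : 0 < K).
Hypotheses (d_metric : nat_metric d) (d_sum : exp_summable d).
Hypotheses (b_loc : exp_localized w b d Cg g) (g_gt0 : 0 < g).
Hypothesis gs : gram_schmidt_pair w b phi psi.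

Lemma gram_schmidt_riesz_lower :
  exists2 A, 0 < A & forall M (y : nat -> R),
    \sum_(m < M) y m ^+ 2 <= A * `|\sum_(m < M) y m *: phi m| ^+ 2.
Proof.
have [_ _ d_sym _] := d_metric.
have [e [e_gt0 decay]] := gram_schmidt_decay (bounded_coercive_adjoint bK) w_riesz
  C_gt0 c0_gt0 (ltW K_gt0) d_metric d_sum (exp_localized_adjoint d_metric b_loc) g_gt0.
have [Be Be_gt0 Be_sum] := d_sum e_gt0.
set D := 1 + 2 * (K * C / c0) ^+ 2.
have D_gt0 : 0 < D by rewrite /D; have := sqr_ge0 (K * C / c0); lra.
have [P Pdef] := choice (fun m => decay m _ (gs m).2).
exists ((C / c0) ^+ 2 * (D * Be) ^+ 2 * (K ^+ 2 * C)).
  apply: mulr_gt0; first apply: mulr_gt0.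
  - by rewrite exprn_gt0 // divr_gt0.
  - by rewrite exprn_gt0 // mulr_gt0.
  - by rewrite mulr_gt0 // exprn_gt0.
move=> M y; set x := \sum_(m < M) y m *: phi m.
have y_le j : (j < M)%N -> y j ^+ 2 <= (C / c0) ^+ 2 * b x (psi j) ^+ 2.
  move=> lt_jM; have [gphi gpsi] := gs j.
  have /andP[t_ge _] := gram_schmidt_pair_bounds bK w_riesz C_gt0 c0_gt0 (ltW K_gt0) gphi gpsi.
  have st : 1 <= C / c0 * b (phi j) (psi j).
    by rewrite mulrAC ler_pdivlMr // mul1r -ler_pdivrMl // mulrC.
  rewrite (gram_schmidt_sum_pair bK _ gs lt_jM).
  rewrite (_ : _ * _ ^+ 2 = y j ^+ 2 * (C / c0 * b (phi j) (psi j)) ^+ 2); last by ring.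
  by rewrite ler_peMr ?sqr_ge0 ?exprn_ege1.
have psi_sum j : (j < M)%N -> b x (psi j) = \sum_(k < M) P j k * b x (w k).
  move=> lt_jM; have [-> P0 _] := Pdef j.
  rewrite (bilin_sumZr (form_bilinear bK)).
  rewrite [RHS](sumr_ord_widen (F := fun k => P j k * b x (w k)) lt_jM) //.
  by move=> k lt_jk; rewrite P0 ?mul0r.
have schur : \sum_(j < M) (\sum_(k < M) P j k * b x (w k)) ^+ 2
    <= (D * Be) ^+ 2 * \sum_(k < M) b x (w k) ^+ 2.
  apply: (@schur_test_sqr _ M P (fun j k => D * expR (- (e * d k j))) (fun k => b x (w k))).
  - by rewrite mulr_ge0 // ltW.
  - by move=> j k; have [_ _ ->] := Pdef j.
  - move=> j; rewrite -mulr_sumr ler_pM2l //.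
    by under eq_bigr do rewrite d_sym.
  - by move=> k; rewrite -mulr_sumr ler_pM2l.
apply: (@le_trans _ _ (\sum_(j < M) (C / c0) ^+ 2 * b x (psi j) ^+ 2)).
  by apply: ler_sum => j _; apply: y_le.
rewrite -mulr_sumr (eq_bigr (fun j : 'I_M => (\sum_(k < M) P j k * b x (w k)) ^+ 2)).
  rewrite -2![X in _ <= X]mulrA ler_pM2l ?exprn_gt0 ?divr_gt0 //.
  apply: le_trans schur _; rewrite ler_pM2l ?exprn_gt0 ?mulr_gt0 //.
  exact: sum_sqr_form_basis_le bK w_riesz C_gt0 (ltW K_gt0) x M.
by move=> j _; rewrite psi_sum.
Qed.

End RieszLower.

Definition riesz_sequence (R : realType) (V : normedModType R) (phi : nat -> V) (A : R) :=
  forall M (y : nat -> R),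
    A^-1 * `|\sum_(m < M) y m *: phi m| ^+ 2 <= \sum_(m < M) y m ^+ 2 /\
    \sum_(m < M) y m ^+ 2 <= A * `|\sum_(m < M) y m *: phi m| ^+ 2.

Section RieszSequence.
Variables (R : realType) (V : normedModType R) (w : nat -> V) (b : V -> V -> R).
Variables (C c0 K : R) (d : nat -> nat -> R) (Cg g : R) (phi psi : nat -> V).
Hypotheses (bK : bounded_coercive b c0 K) (w_riesz : riesz_basis w C).
Hypotheses (C_gt0 : 0 < C) (c0_gt0 : 0 < c0) (K_gt0 : 0 < K).
Hypotheses (d_metric : nat_metric d) (d_sum : exp_summable d).
Hypotheses (b_loc : exp_localized w b d Cg g) (g_gt0 : 0 < g).
Hypothesis gs : gram_schmidt_pair w b phi psi.

Lemma gram_schmidt_riesz_upper :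
  exists2 A, 0 < A & forall M (y : nat -> R),
    `|\sum_(m < M) y m *: phi m| ^+ 2 <= A * \sum_(m < M) y m ^+ 2.
Proof.
have gs' : gram_schmidt_pair w (adjoint_form b) psi phi by move=> m; have [] := gs m.
have [AL AL_gt0 lower] := gram_schmidt_riesz_lower (bounded_coercive_adjoint bK) w_riesz
  C_gt0 c0_gt0 K_gt0 d_metric d_sum (exp_localized_adjoint d_metric b_loc) g_gt0 gs'.
set T := K ^+ 2 * C / c0.
have T_gt0 : 0 < T by rewrite divr_gt0 // mulr_gt0 // exprn_gt0.
exists (T ^+ 2 * AL / c0 ^+ 2); first by rewrite divr_gt0 ?exprn_gt0 // mulr_gt0 // exprn_gt0.
move=> M y; set x := \sum_(m < M) y m *: phi m; set Y := \sum_(m < M) _.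
have : span_first w M x.
  apply: span_first_sum => m _; apply: span_firstZ.
  exact: gram_schmidt_span (ltn_ord m) (gs m).1.
case/(unitriangular_span (fun m _ => (gs m).2.1)) => beta xE.
have := lower M beta; rewrite -xE; set B2 := \sum_(m < M) _ => le_beta.
set u := c0 / (T * AL).
have u_gt0 : 0 < u by rewrite divr_gt0 // mulr_gt0.
have le_bxx : b x x <= T * ((u * B2 + Y / u) / 2).
  have -> : T * ((u * B2 + Y / u) / 2) =
      \sum_(m < M) T * ((u * beta m ^+ 2 + y m ^+ 2 / u) / 2).
    by rewrite -mulr_sumr -mulr_suml big_split /= -mulr_sumr -mulr_suml.
  rewrite {2}xE (bilin_sumZr (form_bilinear bK)); apply: ler_sum => m _.
  rewrite /x (gram_schmidt_sum_pair bK _ gs (ltn_ord m)) [X in X <= _]mulrA.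
  apply: mul_le_amgm => //; have [gphi gpsi] := gs m.
  have /andP[t_ge t_le] := gram_schmidt_pair_bounds bK w_riesz C_gt0 c0_gt0 (ltW K_gt0) gphi gpsi.
  by rewrite t_le (le_trans _ t_ge) // divr_ge0 // ltW.
have le_beta_x : T * (u * B2) <= c0 * `|x| ^+ 2.
  apply: le_trans (ler_wpM2l (ltW T_gt0) (ler_wpM2l (ltW u_gt0) le_beta)) _.
  have key : T * (u * AL) = c0 by rewrite /u; field; rewrite !gt_eqF.
  by rewrite (mulrA u) (mulrA T) key.
have -> : T ^+ 2 * AL / c0 ^+ 2 * Y = T * (Y / u) / c0.
  by rewrite /u; field; rewrite !gt_eqF.
have := form_coercive bK x; rewrite ler_pdivlMr //; lra.
Qed.

Lemma gram_schmidt_riesz_sequence :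
  exists2 A, 0 < A & riesz_sequence phi A.
Proof.
have [AL AL_gt0 lower] := gram_schmidt_riesz_lower bK w_riesz C_gt0 c0_gt0 K_gt0
  d_metric d_sum b_loc g_gt0 gs.
have [AU AU_gt0 upper] := gram_schmidt_riesz_upper.
exists (AL + AU) => [|M y]; first exact: addr_gt0.
have := lower M y; have := upper M y; have := sqr_ge0 `|\sum_(m < M) y m *: phi m|.
move=> ? ? ?; split; [rewrite ler_pdivrMl ?addr_gt0 // |]; nra.
Qed.

End RieszSequence.

Lemma riesz_sequence_range (R : realType) (V : normedModType R) (phi : nat -> V) (A : R)
    (y : nat -> R) n m :
  riesz_sequence phi A ->
  A^-1 * `|\sum_(n <= j < m) y j *: phi j| ^+ 2 <= \sum_(n <= j < m) y j ^+ 2 /\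
  \sum_(n <= j < m) y j ^+ 2 <= A * `|\sum_(n <= j < m) y j *: phi j| ^+ 2.
Proof.
move=> phiR.
have mask (T : nmodType) (F : nat -> R -> T) : (forall j, F j 0 = 0) ->
    \sum_(n <= j < m) F j (y j) = \sum_(j < m) F j (if (n <= j)%N then y j else 0).
  by move=> F0; rewrite big_geq_mkord big_mkcond; apply: eq_bigr => j _ /=; case: ifP.
rewrite (mask _ (fun j r => r *: phi j)) => [|j]; last exact: scale0r.
rewrite (mask _ (fun _ r => r ^+ 2)) => [|j]; last exact: expr0n.
exact: (phiR m (fun j => if (n <= j)%N then y j else 0)).
Qed.

Section QuasiOrthogonality.
Variables (R : realType) (V : normedModType R) (x : nat -> V) (u : V) (A : R).
Hypotheses (A_gt0 : 0 < A) (x_cvg : x @ \oo --> u).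
Hypothesis increments_le : forall l L, (l <= L)%N ->
  \sum_(l <= k < L) `|x k.+1 - x k| ^+ 2 <= A * `|x L - x l| ^+ 2.
Hypothesis increments_ge : forall l L, (l <= L)%N ->
  `|x L - x l| ^+ 2 <= A * \sum_(l <= k < L) `|x k.+1 - x k| ^+ 2.

Let sqr_dist_cvg l (c : R) :
  (fun L => (c * `|x L - x l| ^+ 2)%:E) @ \oo --> (c * `|u - x l| ^+ 2)%:E.
Proof.
apply: cvg_EFin; first by near=> L.
have dist_cvg : (fun L => `|x L - x l|) @ \oo --> `|u - x l|.
  by apply: cvg_norm; apply: cvgB => //; apply: cvg_cst.
rewrite expr2 /comp /=; under eq_fun do rewrite expr2.
exact: cvgM (cvg_cst c) (cvgM dist_cvg dist_cvg).
Unshelve. all: by end_near.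
Qed.

Let partial_sums_cvg l :
  (fun L => \sum_(l <= k < L) (`|x k.+1 - x k| ^+ 2)%:E) @ \oo -->
    (\sum_(l <= k <oo) (`|x k.+1 - x k| ^+ 2)%:E)%E.
Proof. by apply: is_cvg_nneseries => k _ _; rewrite lee_fin sqr_ge0. Qed.

Lemma quasi_orthogonality l :
  ((A^-1 * `|u - x l| ^+ 2)%:E <= \sum_(l <= k <oo) (`|x k.+1 - x k| ^+ 2)%:E)%E /\
  (\sum_(l <= k <oo) (`|x k.+1 - x k| ^+ 2)%:E <= (A * `|u - x l| ^+ 2)%:E)%E.
Proof.
split.
  apply: (lee_cvg_to (@sqr_dist_cvg l (A^-1)) (@partial_sums_cvg l)); near=> L.
  rewrite sumEFin lee_fin ler_pdivrMl // increments_ge //.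
  by near: L; exists l.
apply: (lee_cvg_to (@partial_sums_cvg l) (@sqr_dist_cvg l A)); near=> L.
rewrite sumEFin lee_fin increments_le //.
by near: L; exists l.
Unshelve. all: by end_near.
Qed.

End QuasiOrthogonality.

Lemma galerkin_gram_schmidt (R : realType) (V : normedModType R) (w : nat -> V)
    (b : V -> V -> R) (C c0 K : R) (phi psi : nat -> V) (u : V) n :
  bounded_coercive b c0 K -> riesz_basis w C -> 0 < C -> 0 < c0 ->
  gram_schmidt_pair w b phi psi ->
  galerkin_solution b (span_first w n) u
    (\sum_(m < n) (b u (psi m) / b (phi m) (psi m)) *: phi m).
Proof.
move=> bK w_riesz C_gt0 c0_gt0 gs; have b_bil := form_bilinear bK; split.
  apply: span_first_sum => m _; apply: span_firstZ.
  exact: gram_schmidt_span (ltn_ord m) (gs m).1.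
move=> _ /(unitriangular_span (fun m _ => (gs m).2.1)) [beta ->].
rewrite !bilin_sumZr //; apply: eq_bigr => j _; have [gphi gpsi] := gs j.
rewrite (gram_schmidt_sum_pair bK (fun m => b u (psi m) / b (phi m) (psi m)) gs (ltn_ord j)).
by rewrite divfK // (gram_schmidt_pair_neq0 bK w_riesz C_gt0 c0_gt0 gphi gpsi).
Qed.

Lemma big_nat_blocks (T : nmodType) (N : nat -> nat) (F : nat -> T) l L :
  {homo N : m n / (m <= n)%N} -> (l <= L)%N ->
  \sum_(l <= k < L) \sum_(N k <= j < N k.+1) F j = \sum_(N l <= j < N L) F j.
Proof.
move=> N_mono; elim: L => [|L IH]; first by rewrite leqn0 => /eqP ->; rewrite !big_geq.
rewrite leq_eqVlt => /predU1P[<- | lt_lL]; first by rewrite !big_geq.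
by rewrite big_nat_recr //= IH // -big_cat_nat // N_mono.
Qed.

Section RieszIncrements.
Variables (R : realType) (V : normedModType R) (phi : nat -> V) (A : R).
Variables (y : nat -> R) (N : nat -> nat).
Hypotheses (phiR : riesz_sequence phi A) (A_gt0 : 0 < A).
Hypothesis N_mono : {homo N : m n / (m <= n)%N}.

Let x k := series (fun j => y j *: phi j) (N k).

Let x_sub n m : (n <= m)%N -> x m - x n = \sum_(N n <= j < N m) y j *: phi j.
Proof. by move=> le_nm; rewrite /x sub_series_geq // N_mono. Qed.

Lemma riesz_increments_le l L : (l <= L)%N ->
  \sum_(l <= k < L) `|x k.+1 - x k| ^+ 2 <= A ^+ 2 * `|x L - x l| ^+ 2.
Proof.
move=> le_lL.
apply: (@le_trans _ _ (\sum_(l <= k < L) A * \sum_(N k <= j < N k.+1) y j ^+ 2)).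
  apply: ler_sum_nat => k _; rewrite x_sub //.
  by have [+ _] := riesz_sequence_range y (N k) (N k.+1) phiR; rewrite ler_pdivrMl.
rewrite -mulr_sumr big_nat_blocks // expr2 -mulrA ler_pM2l // x_sub //.
by have [_] := riesz_sequence_range y (N l) (N L) phiR.
Qed.

Lemma riesz_increments_ge l L : (l <= L)%N ->
  `|x L - x l| ^+ 2 <= A ^+ 2 * \sum_(l <= k < L) `|x k.+1 - x k| ^+ 2.
Proof.
move=> le_lL; rewrite x_sub //.
have [+ _] := riesz_sequence_range y (N l) (N L) phiR; rewrite ler_pdivrMl // => le_y.
apply: le_trans le_y _; rewrite -big_nat_blocks // expr2 -mulrA ler_pM2l // mulr_sumr.
apply: ler_sum_nat => k _; rewrite x_sub //.
by have [_] := riesz_sequence_range y (N k) (N k.+1) phiR.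
Qed.

End RieszIncrements.

Lemma bounded_coercive_of (R : realType) (V : normedModType R) (a : V -> V -> R) (c0 : R) :
  bounded_bilinear a -> coercivity_constant a c0 -> exists2 K, 0 < K & bounded_coercive a c0 K.
Proof.
case=> al ar [K0 bnd] [coer _]; have a_bil : bilinear_form a := conj al ar.
exists (`|K0| + 1); first by have := normr_ge0 K0; lra.
split => // [x y | x].
  apply: le_trans (bnd x y) _; rewrite -!mulrA; apply: ler_wpM2r; first exact: mulr_ge0.
  by have := ler_norm K0; lra.
have [-> | x_neq0] := eqVneq x 0; first by rewrite bilin0l // normr0 expr0n mulr0.
by have := coer x x_neq0; rewrite ler_pdivlMr ?exprn_gt0 ?normr_gt0.
Qed.

Lemma jaffard_exp_decay (R : realType) (M : nat -> nat -> R) : jaffard M ->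
  exists d (Cg g : R), [/\ nat_metric d, exp_summable d, 0 < g &
    forall i j, `|M i j| <= Cg * expR (- (g * d i j))].
Proof.
case=> d [d_metric [d_sum [gam [gam_gt0 decay]]]].
have g_gt0 : 0 < gam / 2 by rewrite divr_gt0.
have [|Cg M_le] := decay _ g_gt0; first by rewrite ltr_pdivrMr //; lra.
exists d, Cg, (gam / 2); split => //.
move=> eps eps_gt0; have [B sum_le] := d_sum eps eps_gt0.
exists (Num.max 1 B) => [|i n]; first by rewrite lt_max ltr01.
have ge0 j : (0 <= (expR (- (eps * d i j)))%:E)%E by rewrite lee_fin expR_ge0.
have := le_trans (nneseries_lim_ge n (fun j _ _ => ge0 j)) (sum_le i).
by rewrite sumEFin lee_fin big_mkord => le_B; rewrite le_max le_B orbT.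
Qed.

Unset Implicit Arguments.

Theorem theorem3p12 (R : realType) (V : completeNormedModType R)
  (ip : V -> V -> R) (a : V -> V -> R) (w : nat -> V) (C c0 : R) :
  hilbert_inner ip -> separable_space V ->
  bounded_bilinear a -> coercivity_constant a c0 -> 0 < c0 ->
  0 < C -> riesz_basis w C ->
  jaffard (fun i j => a (w j) (w i)) ->
  exists Cqo : R, 0 < Cqo /\
    forall (f : V -> R) (u : V) (N : nat -> nat) (ul : nat -> V),
      dual_elt f ->
      (forall v, a u v = f v) ->
      (forall l, (N l < N l.+1)%N) ->
      (forall l, span_first w (N l) (ul l) /\
                 forall v, span_first w (N l) v -> a (ul l) v = f v) ->
      forall l : nat,
        ((Cqo^-1 * `|u - ul l| ^+ 2)%:E
           <= \sum_(l <= k <oo) (`|ul k.+1 - ul k| ^+ 2)%:E)%E /\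
        (\sum_(l <= k <oo) (`|ul k.+1 - ul k| ^+ 2)%:E
           <= (Cqo * `|u - ul l| ^+ 2)%:E)%E.
Proof.
move=> _ _ a_bnd a_coer c0_gt0 C_gt0 w_riesz a_jaf.
have [K K_gt0 aK] := bounded_coercive_of a_bnd a_coer.
have [d [Cg [g [d_metric d_sum g_gt0 a_loc]]]] := jaffard_exp_decay a_jaf.
have [phi [psi gs]] := gram_schmidt_pair_exists aK w_riesz C_gt0 c0_gt0.
have [A A_gt0 phiR] := gram_schmidt_riesz_sequence aK w_riesz C_gt0 c0_gt0 K_gt0
  d_metric d_sum a_loc g_gt0 gs.
exists (A ^+ 2); split => [|f u N ul _ u_sol N_incr ul_sol]; first exact: exprn_gt0.
have N_mono : {homo N : m n / (m <= n)%N}.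
  exact: homo_leq leqnn leq_trans (fun k => ltnW (N_incr k)).
have ul_gal k : galerkin_solution a (span_first w (N k)) u (ul k).
  by have [Sul ul_f] := ul_sol k; split => // v Sv; rewrite ul_f ?u_sol.
have ulE : ul = fun k => series (fun j => (a u (psi j) / a (phi j) (psi j)) *: phi j) (N k).
  apply/funext => k /=.
  apply: (galerkin_unique aK c0_gt0 (ltW K_gt0) (@span_firstB _ _ w _) (ul_gal k)).
  by rewrite seriesEord /=; exact: galerkin_gram_schmidt aK w_riesz C_gt0 c0_gt0 gs.
have [lam lam_u] := w_riesz.1 u.
apply: quasi_orthogonality => [||l L|l L]; first exact: exprn_gt0.
- apply: galerkin_cvg aK c0_gt0 (ltW K_gt0) lam_u _ ul_gal => l.
  by elim: l => // l IH; exact: leq_ltn_trans IH (N_incr l).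
- by rewrite ulE; exact: riesz_increments_le.
- by rewrite ulE; exact: riesz_increments_ge.
Qed.
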